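(* The optimal variational distributions of the E-step problem are $$q_d^*(x'|x,a)=\frac{p(x'|x,a)\exp(V_\pi(x'))}{\exp\big(Q_\pi(x,a)-\eta\, r(x,a)\big)},\qquad q_c^*(a|x)=\frac{\pi(a|x)\exp(Q_\pi(x,a))}{\exp(V_\pi(x))},$$ for all $x,x'\in\mathcal X$, $a\in\mathcal A$, where $Q_\pi(x,a):=\eta\, r(x,a)+\log\mathbb E_{x'\sim p(\cdot|x,a)}[\exp(V_\pi(x'))]$.
   Context: Setting: a Markov decision process with finite state space $\mathcal X$, action space $\mathcal A$, reward $r$, transition kernel $p(\cdot|x,a)$, initial distribution $p_0$; $\mathcal X^0$ is the set of terminal states, trajectories stop at the hitting time $T$ of $\mathcal X^0$, and a terminal state is reached with probability one under every policy. A baseline policy $\pi$ and temperature $\eta>0$ are fixed. The E-step problem is $$(q_c^*,q_d^* )\in\arg\max_{q_c,q_d}\mathbb E\Big[\sum_{t=0}^{T-1}\eta\, r(x_t,a_t)-\log\frac{q_c(a_t|x_t)}{\pi(a_t|x_t)}-\log\frac{q_d(x_{t+1}|x_t,a_t)}{p(x_{t+1}|x_t,a_t)}\,\Big|\,p_0,q_d,q_c\Big]$$ over policies $q_c$ and transition kernels $q_d$, trajectories generated by $a_t\sim q_c(\cdot|x_t)$, $x_{t+1}\sim q_d(\cdot|x_t,a_t)$. The E-step optimal value function $V_\pi(x)$ is this expected sum under $(q_c^*,q_d^* )$ from $x_0=x$, with $V_\pi=0$ on $\mathcal X^0$. *)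

From HB Require Import structures.
From mathcomp Require Import all_boot all_order all_algebra.
From mathcomp Require Import all_classical all_reals all_analysis.
Set Implicit Arguments. Unset Strict Implicit. Unset Printing Implicit Defensive.
Import Order.TTheory GRing.Theory Num.Theory.
Local Open Scope ring_scope.
Local Open Scope classical_set_scope.
Import numFieldNormedType.Exports.

Section EStep.
Variables (R : realType) (X A : finType).

Definition is_dist (T : finType) (d : T -> R) :=
  (forall t, 0 <= d t) /\ \sum_(t : T) d t = 1.

Definition is_policy (q : X -> A -> R) := forall x, is_dist (q x).
Definition is_kernel (q : X -> A -> X -> R) := forall x a, is_dist (q x a).

Variable X0 : {set X}.  (* terminal states *)

(* survival n x = P(T > n) when starting from x_0 = x, trajectories generated
   by a_t ~ qc(.|x_t), x_{t+1} ~ qd(.|x_t,a_t), stopped at hitting time T of X0 *)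
Fixpoint survival (qc : X -> A -> R) (qd : X -> A -> X -> R) (n : nat) (x : X)
  : R :=
  if x \in X0 then 0 else
  match n with
  | 0 => 1
  | n'.+1 => \sum_(a : A) \sum_(x' : X) qc x a * qd x a x' * survival qc qd n' x'
  end.

Definition terminates qc qd :=
  forall x : X, (fun n => survival qc qd n x) @ \oo --> (0 : R)%R.

Variables (p : X -> A -> X -> R) (pi : X -> A -> R) (r : X -> A -> R) (eta : R).

(* expected value of the E-step objective truncated at time min(T, n) *)
Fixpoint trunc_obj (qc : X -> A -> R) (qd : X -> A -> X -> R) (n : nat) (x : X)
  : R :=
  if x \in X0 then 0 else
  match n with
  | 0 => 0
  | n'.+1 => \sum_(a : A) \sum_(x' : X) qc x a * qd x a x' *
      (eta * r x a - ln (qc x a / pi x a) - ln (qd x a x' / p x a x')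
       + trunc_obj qc qd n' x')
  end.

(* E[ sum_{t<T} eta r - log(qc/pi) - log(qd/p) | x_0 = x, qd, qc ] *)
Definition estep_obj qc qd (x : X) : R := limn (fun n => trunc_obj qc qd n x).

(* admissible pairs: distributions, finite KL terms along the trajectory
   (absolute continuity where used), and almost-sure termination *)
Definition admissible qc qd :=
  [/\ is_policy qc, is_kernel qd,
      (forall x a, x \notin X0 -> 0 < qc x a -> 0 < pi x a),
      (forall x a x', x \notin X0 -> 0 < qc x a -> 0 < qd x a x' -> 0 < p x a x')
    & terminates qc qd].

Definition estep_optimal qc qd :=
  admissible qc qd /\
  forall qc' qd', admissible qc' qd' -> forall x, estep_obj qc' qd' x <= estep_obj qc qd x.

End EStep.

From HB Require Import structures.
From mathcomp Require Import all_boot all_order all_algebra.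
From mathcomp Require Import all_classical all_reals all_analysis.
From mathcomp Require Import lra.
Import Order.TTheory GRing.Theory Num.Theory.
Import numFieldNormedType.Exports.
Local Open Scope ring_scope.
Local Open Scope classical_set_scope.

(* The optimal E-step pair is the Gibbs (softmax) pair of the optimal value V:
   q_d*(x'|x,a) is proportional to p(x'|x,a) exp V(x') and q_c*(a|x) to
   pi(a|x) exp Q(x,a), where V itself solves the soft Bellman equation
   V(x) = ln sum_a pi(a|x) exp Q(x,a). *)

Lemma cvgn_tail_bound {R : realType} (u e : nat -> R) :
  (forall n m, `|u (n + m)%N - u n| <= e n) ->
  (forall eps, 0 < eps -> exists N, e N < eps) ->
  cvgn u /\ forall n, `|limn u - u n| <= e n.
Proof.
move=> H He.
have cu : cvgn u.
  apply/cauchy_cvgP/cauchyP => eps eps0.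
  have [N HN] := He _ eps0.
  exists (u N) => /=; exists N => // n /= Nn.
  rewrite -ball_normE /ball_ /= -(subnKC Nn) distrC.
  exact: le_lt_trans (H _ _) HN.
split => // n.
have nb : \forall k \near \oo, `|u k - u n| <= e n.
  by exists n => // k /= nk; rewrite -(subnKC nk); exact: H.
rewrite ler_norml; apply/andP; split.
  rewrite lerBrDl; apply: limr_ge => //.
  by apply: filterS nb => k; rewrite ler_norml => /andP[h1 _] /=; lra.
rewrite lerBlDl; apply: limr_le => //.
by apply: filterS nb => k; rewrite ler_norml => /andP[_ h2] /=; lra.
Qed.

Lemma eq0_of_small_bound {R : realType} {e : nat -> R} {a : R} :
  (forall eps, 0 < eps -> exists N, e N < eps) ->
  (forall n, `|a| <= 2 * e n) -> a = 0.
Proof.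
move=> He Ha; apply/eqP; apply: contraT => a0.
have pa : 0 < `|a| / 4 by rewrite divr_gt0 // normr_gt0.
by have [N HN] := He _ pa; have := Ha N; lra.
Qed.

Lemma ler_sum_term {R : realType} {I : finType} (F : I -> R) (i : I) :
  (forall j, 0 <= F j) -> F i <= \sum_j F j.
Proof.
by move=> F0; rewrite (bigD1 i) //= lerDl; apply: sumr_ge0 => j _; exact: F0.
Qed.

Lemma wavg_gt0 {R : realType} {I : finType} (w g : I -> R) :
  (forall i, 0 <= w i) -> \sum_i w i = 1 -> (forall i, 0 < g i) ->
  0 < \sum_i w i * g i.
Proof.
move=> w0 sw g0; rewrite lt_neqAle; apply/andP; split; last first.
  by apply: sumr_ge0 => i _; rewrite mulr_ge0 // ltW.
rewrite eq_sym psumr_eq0; last by move=> i _; rewrite mulr_ge0 // ltW.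
apply/negP => /allP H.
have : \sum_i w i = 0.
  apply: big1 => i _; have := H i (mem_index_enum i).
  by rewrite mulf_eq0 (gt_eqF (g0 i)) orbF => /eqP.
by rewrite sw => /eqP; rewrite oner_eq0.
Qed.

Section StoppedChain.
Variables (R : realType) (X A : finType) (X0 : {set X}).
Variables (qc : X -> A -> R) (qd : X -> A -> X -> R).
Hypotheses (hc : is_policy qc) (hd : is_kernel qd).

Definition step_exp (F : A -> X -> R) (x : X) : R :=
  \sum_(a : A) \sum_(x' : X) qc x a * qd x a x' * F a x'.

Lemma step_weight_ge0 x a x' : 0 <= qc x a * qd x a x'.
Proof. by rewrite mulr_ge0 //; [case: (hc x) | case: (hd x a)]. Qed.

Lemma step_weight_sum1 x : \sum_a \sum_x' qc x a * qd x a x' = 1.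
Proof.
under eq_bigr => a _ do rewrite -big_distrr /= (proj2 (hd x a)) mulr1.
exact: (proj2 (hc x)).
Qed.

Lemma step_exp_le F G x :
  (forall a y, F a y <= G a y) -> step_exp F x <= step_exp G x.
Proof.
move=> H; apply: ler_sum => a _; apply: ler_sum => y _.
by apply: ler_wpM2l; [exact: step_weight_ge0 | exact: H].
Qed.

Lemma step_exp_cst k x : step_exp (fun _ _ => k) x = k.
Proof.
rewrite /step_exp.
under eq_bigr => a _ do rewrite -big_distrl /=.
by rewrite -big_distrl /= step_weight_sum1 mul1r.
Qed.

Lemma step_expD F G x :
  step_exp (fun a y => F a y + G a y) x = step_exp F x + step_exp G x.
Proof.
rewrite /step_exp -big_split; apply: eq_bigr => a _ /=.
by rewrite -big_split; apply: eq_bigr => y _; rewrite mulrDr.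
Qed.

Lemma step_expB F G x :
  step_exp (fun a y => F a y - G a y) x = step_exp F x - step_exp G x.
Proof.
rewrite /step_exp -sumrB; apply: eq_bigr => a _ /=.
by rewrite -sumrB; apply: eq_bigr => y _; rewrite mulrBr.
Qed.

Lemma step_expB_cancel c F G x :
  step_exp (fun a y => (c a y + F a y) - (c a y + G a y)) x =
  step_exp (fun a y => F a y - G a y) x.
Proof.
by apply: eq_bigr => a _; apply: eq_bigr => y _; rewrite opprD addrACA subrr add0r.
Qed.

Lemma step_expZ k F x : step_exp (fun a y => k * F a y) x = k * step_exp F x.
Proof.
rewrite /step_exp big_distrr; apply: eq_bigr => a _ /=.
by rewrite big_distrr; apply: eq_bigr => y _ /=; rewrite mulrCA.
Qed.

Lemma step_exp_norm F x : `|step_exp F x| <= step_exp (fun a y => `|F a y|) x.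
Proof.
apply: le_trans (ler_norm_sum _ _ _) _.
apply: ler_sum => a _; apply: le_trans (ler_norm_sum _ _ _) _.
by apply: ler_sum => y _; rewrite normrM ger0_norm //; exact: step_weight_ge0.
Qed.

Lemma eq_step_exp F G x :
  (forall a y, 0 < qc x a * qd x a y -> F a y = G a y) ->
  step_exp F x = step_exp G x.
Proof.
move=> H; apply: eq_bigr => a _; apply: eq_bigr => y _.
have [w0|wn] := eqVneq (qc x a * qd x a y) 0; first by rewrite w0 !mul0r.
by rewrite H // lt_def wn step_weight_ge0.
Qed.

Local Notation S := (survival X0 qc qd).

Lemma survival_stopped n x : x \in X0 -> S n x = 0.
Proof. by case: n => [|n] /= ->. Qed.

Lemma survival0 x : x \notin X0 -> S 0 x = 1.
Proof. by move=> /negbTE /= ->. Qed.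

Lemma survivalS n x : x \notin X0 -> S n.+1 x = step_exp (fun _ y => S n y) x.
Proof. by move=> /negbTE /= ->. Qed.

Lemma survival_ge0 n x : 0 <= S n x.
Proof.
elim: n x => [|n IH] x; have [hx|hx] := boolP (x \in X0).
- by rewrite survival_stopped.
- by rewrite survival0.
- by rewrite survival_stopped.
by rewrite survivalS // -(step_exp_cst 0 x); exact: step_exp_le.
Qed.

Lemma survival_le1 n x : S n x <= 1.
Proof.
elim: n x => [|n IH] x; have [hx|hx] := boolP (x \in X0).
- by rewrite survival_stopped.
- by rewrite survival0.
- by rewrite survival_stopped.
by rewrite survivalS // -(step_exp_cst 1 x); exact: step_exp_le.
Qed.

Lemma survival_submult n m c x :
  (forall y, S m y <= c) -> S (n + m) x <= c * S n x.
Proof.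
move=> Hc; elim: n x => [|n IH] x; have [hx|hx] := boolP (x \in X0).
- by rewrite !survival_stopped // mulr0.
- by rewrite add0n survival0 // mulr1.
- by rewrite !survival_stopped // mulr0.
by rewrite addSn !survivalS // -step_expZ; exact: step_exp_le.
Qed.

Lemma survival_nonincr n m x : (n <= m)%N -> S m x <= S n x.
Proof.
move=> /subnKC <-; rewrite -[leRHS]mul1r.
by apply: survival_submult => y; exact: survival_le1.
Qed.

Lemma survival_geometric N rho k x :
  (forall y, S N y <= rho) -> S (k * N) x <= rho ^+ k.
Proof.
move=> H; elim: k x => [|k IH] x; first by rewrite mul0n expr0 survival_le1.
have rho0 : 0 <= rho by apply: le_trans (H x); exact: survival_ge0.
rewrite mulSn addnC; apply: le_trans (survival_submult (k * N) N rho x H) _.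
by rewrite exprS; apply: ler_wpM2l.
Qed.

(* Termination, uniformly in the initial state (equivalent to [terminates]
   since X is finite). *)
Definition uniformly_terminating :=
  forall d, 0 < d -> exists N, forall y, S N y <= d.

Lemma terminates_uniformly :
  terminates X0 qc qd -> uniformly_terminating.
Proof.
move=> ht d d0.
have H : \forall n \near \oo, forall y, S n y <= d.
  apply: filter_forall => y.
  move: (ht y) => /cvgrPdist_le /(_ d d0); apply: filterS => n.
  by rewrite sub0r normrN ger0_norm //; exact: survival_ge0.
by case: H => N _ HN; exists N; apply: HN => /=.
Qed.

Lemma uniformly_terminating_terminates :
  uniformly_terminating -> terminates X0 qc qd.
Proof.
move=> ut x; apply/cvgrPdist_le => eps eps0.
have [N HN] := ut _ eps0.
exists N => // n /= Nn; rewrite sub0r normrN ger0_norm ?survival_ge0 //.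
by apply: le_trans (HN x); exact: survival_nonincr.
Qed.

(* A uniform survival bound rho < 1 at one horizon gives geometric decay. *)
Lemma contraction_terminates N rho : 0 <= rho < 1 ->
  (forall y, S N y <= rho) -> uniformly_terminating.
Proof.
move=> /andP[r0 r1] H d d0.
have := @cvg_expr R rho; rewrite ger0_norm // => /(_ r1).
move/cvgrPdist_le => /(_ d d0) [K _ HK].
exists (K * N)%N => y; apply: le_trans (survival_geometric N rho K y H) _.
by have := HK K (leqnn K); rewrite sub0r normrN ger0_norm // exprn_ge0.
Qed.

(* Expected cost accumulated before min(T, n), for a one-step cost c x a x'. *)
Fixpoint trunc_cost (c : X -> A -> X -> R) (n : nat) (x : X) : R :=
  if x \in X0 then 0 else
  match n with
  | 0 => 0
  | n'.+1 => \sum_(a : A) \sum_(x' : X)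
               qc x a * qd x a x' * (c x a x' + trunc_cost c n' x')
  end.

Lemma trunc_cost_stopped c n x : x \in X0 -> trunc_cost c n x = 0.
Proof. by case: n => [|n] /= ->. Qed.

Lemma trunc_cost0 c x : trunc_cost c 0 x = 0.
Proof. by rewrite /=; case: ifP. Qed.

Lemma trunc_costS c n x : x \notin X0 ->
  trunc_cost c n.+1 x = step_exp (fun a y => c x a y + trunc_cost c n y) x.
Proof. by move=> /negbTE /= ->. Qed.

(* Costs collected after time n only accrue on the event T > n. *)
Lemma trunc_cost_tail c n m B x : (forall y, `|trunc_cost c m y| <= B) ->
  `|trunc_cost c (n + m) x - trunc_cost c n x| <= B * S n x.
Proof.
move=> HB; elim: n x => [|n IH] x; have [hx|hx] := boolP (x \in X0).
- by rewrite !trunc_cost_stopped // survival_stopped // subrr normr0 mulr0.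
- by rewrite add0n trunc_cost0 subr0 survival0 // mulr1.
- by rewrite !trunc_cost_stopped // survival_stopped // subrr normr0 mulr0.
rewrite addSn !trunc_costS // -step_expB step_expB_cancel survivalS //.
rewrite -step_expZ; apply: le_trans (step_exp_norm _ _) _.
by apply: step_exp_le => a y; exact: IH.
Qed.

(* E[min(T, n)], the expected truncated hitting time. *)
Local Notation steps := (trunc_cost (fun _ _ _ => 1)).

Lemma steps_ge0 n x : 0 <= steps n x.
Proof.
elim: n x => [|n IH] x; first by rewrite trunc_cost0.
have [hx|hx] := boolP (x \in X0); first by rewrite trunc_cost_stopped.
rewrite trunc_costS // -(step_exp_cst 0 x); apply: step_exp_le => a y.
exact: addr_ge0.
Qed.

Lemma steps_le n x : steps n x <= n%:R.
Proof.
elim: n x => [|n IH] x; first by rewrite trunc_cost0.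
have [hx|hx] := boolP (x \in X0); first by rewrite trunc_cost_stopped.
rewrite trunc_costS // -(step_exp_cst n.+1%:R x); apply: step_exp_le => a y.
by rewrite -addn1 natrD addrC lerD2r.
Qed.

Lemma steps_nondecr n m x : steps m x <= steps (n + m) x.
Proof.
elim: n m x => [|n IH] m x //; rewrite addSn.
apply: le_trans (IH m x) _; elim: (n + m)%N x => [|k IHk] x.
  by rewrite trunc_cost0 steps_ge0.
have [hx|hx] := boolP (x \in X0); first by rewrite !trunc_cost_stopped.
by rewrite !trunc_costS //; apply: step_exp_le => a y; rewrite lerD2l.
Qed.

(* With sigma := sum_y steps m y, one has
   steps (N + m) y <= N + sigma * S N y; summing over y and choosing N with
   S N <= 1 / (2 |X|) gives sigma <= |X| N + sigma / 2. *)
Lemma steps_restart N m y :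
  steps (N + m) y <= N%:R + (\sum_z steps m z) * S N y.
Proof.
have HB z : `|steps m z| <= \sum_z steps m z.
  rewrite ger0_norm ?steps_ge0 //.
  by apply: (ler_sum_term (fun z => steps m z)) => w; exact: steps_ge0.
have := trunc_cost_tail (fun _ _ _ => 1) N m _ y HB.
have := steps_le N y; have := ler_norm (steps (N + m) y - steps N y); lra.
Qed.

Lemma steps_bounded :
  uniformly_terminating -> exists2 C, 0 <= C & forall m x, steps m x <= C.
Proof.
move=> ut.
pose d : R := (2 * (#|X|%:R + 1))^-1.
have d0 : 0 < d by rewrite invr_gt0 mulr_gt0 // ltr_wpDl.
have [N HN] := ut d d0.
have Xd : #|X|%:R * d <= 2^-1.
  rewrite /d invfM mulrCA ger_pMr ?invr_gt0 // ler_pdivrMr ?ltr_wpDl //.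
  by rewrite mul1r lerDl.
exists (2 * (#|X|%:R * N%:R)); first by rewrite !mulr_ge0.
move=> m x; pose sigma := \sum_y steps m y.
have sigma0 : 0 <= sigma by apply: sumr_ge0 => y _; exact: steps_ge0.
have Hsigma : sigma <= #|X|%:R * N%:R + sigma * 2^-1.
  apply: le_trans (_ : \sum_y steps (N + m) y <= _).
    by apply: ler_sum => y _; exact: steps_nondecr.
  apply: le_trans (_ : \sum_y (N%:R + sigma * S N y) <= _).
    by apply: ler_sum => y _; exact: steps_restart.
  rewrite big_split /= sumr_const -big_distrr /= mulr_natl lerD2l.
  apply: ler_wpM2l => //; apply: le_trans Xd.
  apply: le_trans (_ : \sum_(y : X) d <= _); first by apply: ler_sum => y _.
  by rewrite sumr_const mulr_natl.
apply: le_trans (_ : sigma <= _); last by lra.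
by apply: (ler_sum_term (fun y => steps m y)) => y; exact: steps_ge0.
Qed.

Lemma trunc_cost_norm c K m x : (forall x a y, `|c x a y| <= K) ->
  `|trunc_cost c m x| <= K * steps m x.
Proof.
move=> HK; elim: m x => [|m IH] x.
  by rewrite !trunc_cost0 normr0 mulr0.
have [hx|hx] := boolP (x \in X0).
  by rewrite !trunc_cost_stopped // normr0 mulr0.
rewrite !trunc_costS // -step_expZ; apply: le_trans (step_exp_norm _ _) _.
apply: step_exp_le => a y /=; rewrite mulrDr mulr1.
by apply: le_trans (ler_normD _ _) _; apply: lerD.
Qed.

Lemma trunc_cost_bounded c : uniformly_terminating ->
  exists2 B, 0 <= B & forall m y, `|trunc_cost c m y| <= B.
Proof.
move=> ut; pose K := \sum_x \sum_a \sum_y `|c x a y|.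
have HK x a y : `|c x a y| <= K.
  apply: le_trans (_ : \sum_a \sum_y `|c x a y| <= _); last first.
    apply: (ler_sum_term (fun x => \sum_a \sum_y `|c x a y|)) => z.
    by apply: sumr_ge0 => b _; apply: sumr_ge0.
  apply: le_trans (_ : \sum_y `|c x a y| <= _); last first.
    apply: (ler_sum_term (fun a => \sum_y `|c x a y|)) => b.
    exact: sumr_ge0.
  exact: (ler_sum_term (fun y => `|c x a y|)).
have K0 : 0 <= K by do 3![apply: sumr_ge0 => ? _].
have [C C0 HC] := steps_bounded ut.
exists (K * C); first exact: mulr_ge0.
by move=> m y; apply: le_trans (trunc_cost_norm c K m y HK) _; apply: ler_wpM2l.
Qed.

(* The truncated costs converge, at the rate e n := B * sum_y S n y. *)
Lemma trunc_cost_cvg c : uniformly_terminating ->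
  exists e : nat -> R,
  [/\ forall eps, 0 < eps -> exists N, e N < eps,
      forall n, e n.+1 <= e n &
      forall n x, `|limn (trunc_cost c ^~ x) - trunc_cost c n x| <= e n].
Proof.
move=> ut; have [B B0 HB] := trunc_cost_bounded c ut.
pose e n := B * \sum_y S n y.
have e_small eps : 0 < eps -> exists N, e N < eps.
  move=> eps0; pose P := B * #|X|%:R.
  have P0 : 0 <= P by rewrite mulr_ge0.
  have d0 : 0 < eps / (P + 1) by rewrite divr_gt0 // ltr_wpDl.
  have [N HN] := ut _ d0; exists N.
  apply: le_lt_trans (_ : P * (eps / (P + 1)) < _); last first.
    by rewrite mulrA ltr_pdivrMr ?ltr_wpDl //; nra.
  rewrite /e /P -mulrA; apply: ler_wpM2l => //.
  apply: le_trans (_ : \sum_(y : X) (eps / (P + 1)) <= _).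
    by apply: ler_sum => y _; exact: HN.
  by rewrite sumr_const mulr_natl.
have tail x n m : `|trunc_cost c (n + m) x - trunc_cost c n x| <= e n.
  apply: le_trans (trunc_cost_tail c n m B x (HB m)) _.
  apply: ler_wpM2l => //.
  by apply: (ler_sum_term (fun y => S n y)) => z; exact: survival_ge0.
exists e; split => //.
  move=> n; apply: ler_wpM2l => //; apply: ler_sum => y _.
  exact: survival_nonincr.
by move=> n x; exact: (proj2 (@cvgn_tail_bound R (trunc_cost c ^~ x) e (tail x) e_small) n).
Qed.

Lemma trunc_cost_bellman c : uniformly_terminating ->
  (forall x, x \in X0 -> limn (trunc_cost c ^~ x) = 0) /\
  (forall x, x \notin X0 -> limn (trunc_cost c ^~ x) =
     step_exp (fun a y => c x a y + limn (trunc_cost c ^~ y)) x).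
Proof.
move=> ut; have [e [e_small e_nonincr e_lim]] := trunc_cost_cvg c ut.
have e0 n (x : X) : 0 <= e n.
  have := e_lim n x; have := normr_ge0 (limn (trunc_cost c ^~ x) - trunc_cost c n x).
  lra.
split=> x hx; apply/eqP; rewrite -subr_eq0; apply/eqP.
  apply: (eq0_of_small_bound e_small) => n.
  by have := e_lim n x; rewrite trunc_cost_stopped // !subr0; have := e0 n x; lra.
apply: (eq0_of_small_bound e_small) => n.
have h1 := e_lim n.+1 x; rewrite trunc_costS // in h1.
have h2 : `|step_exp (fun a y => c x a y + trunc_cost c n y) x -
            step_exp (fun a y => c x a y + limn (trunc_cost c ^~ y)) x| <= e n.
  rewrite -step_expB step_expB_cancel; apply: le_trans (step_exp_norm _ _) _.
  rewrite -(step_exp_cst (e n) x); apply: step_exp_le => a y /=.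
  by rewrite distrC.
have := ler_normD (limn (trunc_cost c ^~ x) -
  step_exp (fun a y => c x a y + trunc_cost c n y) x)
  (step_exp (fun a y => c x a y + trunc_cost c n y) x -
   step_exp (fun a y => c x a y + limn (trunc_cost c ^~ y)) x).
rewrite addrA subrK; have := e_nonincr n; have := e0 n x; lra.
Qed.

(* Comparison principle: under uniform termination, a function that is
   nonpositive on X0 and a subsolution D x <= E[D x_1] off X0 is
   nonpositive (iterating gives D x <= max|D| * S n x -> 0). *)
Lemma subsolution_nonpos (D : X -> R) : uniformly_terminating ->
  (forall x, x \in X0 -> D x <= 0) ->
  (forall x, x \notin X0 -> D x <= step_exp (fun _ y => D y) x) ->
  forall x, D x <= 0.
Proof.
move=> ut H0 H1 x; pose M := \sum_y `|D y|.
have M0 : 0 <= M by apply: sumr_ge0.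
have HM n z : D z <= M * S n z.
  elim: n z => [|n IH] z; have [hz|hz] := boolP (z \in X0).
  - by rewrite survival_stopped // mulr0; exact: H0.
  - rewrite survival0 // mulr1; apply: le_trans (ler_norm _) _.
    exact: (ler_sum_term (fun y => `|D y|)).
  - by rewrite survival_stopped // mulr0; exact: H0.
  by rewrite survivalS // -step_expZ; apply: le_trans (H1 _ hz) _; exact: step_exp_le.
rewrite leNgt; apply/negP => Dx.
have d0 : 0 < D x / (M + 1) by rewrite divr_gt0 // ltr_wpDl.
have [N HN] := ut _ d0.
have h2 : M * S N x <= M * (D x / (M + 1)) by apply: ler_wpM2l.
have h3 : M * (D x / (M + 1)) < D x by rewrite mulrA ltr_pdivrMr ?ltr_wpDl //; nra.
by have := HM N x; lra.
Qed.

End StoppedChain.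

Arguments step_exp {R X A}.
Arguments step_weight_ge0 {R X A}.
Arguments step_weight_sum1 {R X A}.
Arguments step_exp_le {R X A}.
Arguments step_exp_cst {R X A}.
Arguments step_expD {R X A}.
Arguments step_expB {R X A}.
Arguments step_expB_cancel {R X A}.
Arguments step_expZ {R X A}.
Arguments eq_step_exp {R X A}.
Arguments survival_stopped {R X A}.
Arguments survival0 {R X A}.
Arguments survivalS {R X A}.
Arguments survival_ge0 {R X A}.
Arguments survival_le1 {R X A}.
Arguments uniformly_terminating {R X A}.
Arguments terminates_uniformly {R X A}.
Arguments uniformly_terminating_terminates {R X A}.
Arguments contraction_terminates {R X A}.
Arguments trunc_cost {R X A}.
Arguments trunc_cost_bellman {R X A}.
Arguments subsolution_nonpos {R X A}.

Section Domination.
Variables (R : realType) (X A : finType) (X0 : {set X}) (qc : X -> A -> R).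
Variables (qd1 qd2 : X -> A -> X -> R) (m : R).
Hypotheses (hc : is_policy qc) (hd1 : is_kernel qd1) (hd2 : is_kernel qd2).
Hypotheses (m0 : 0 < m) (m1 : m <= 1) (qd12 : forall x a y, m * qd2 x a y <= qd1 x a y).

(* If qd1 >= m qd2, then every path of length n is at least m^n times as
   likely under qd1, so the absorption probabilities compare. *)
Lemma absorption_dominated n x :
  m ^+ n * (1 - survival X0 qc qd2 n x) <= 1 - survival X0 qc qd1 n x.
Proof.
elim: n x => [|n IH] x; have [hx|hx] := boolP (x \in X0).
- by rewrite !survival_stopped // expr0 mul1r.
- by rewrite !survival0 // subrr mulr0.
- by rewrite !survival_stopped // subr0 mulr1 exprn_ile1 // ltW.
rewrite !survivalS // -{1}(step_exp_cst qc qd2 hc hd2 1 x).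
rewrite -{2}(step_exp_cst qc qd1 hc hd1 1 x) -!step_expB -step_expZ.
apply: le_trans (_ : step_exp qc qd1
  (fun _ y => m ^+ n * (1 - survival X0 qc qd2 n y)) x <= _); last first.
  by apply: (step_exp_le _ _ hc hd1) => a y; exact: IH.
apply: ler_sum => a _; apply: ler_sum => y _.
have sy : 0 <= 1 - survival X0 qc qd2 n y by rewrite subr_ge0 survival_le1.
have qca : 0 <= qc x a by case: (hc x).
rewrite exprS -!mulrA; apply: ler_wpM2l => //.
rewrite mulrCA mulrA; apply: ler_wpM2r; first by rewrite mulr_ge0 // exprn_ge0 // ltW.
exact: qd12.
Qed.

Lemma dominated_terminates :
  uniformly_terminating X0 qc qd2 -> uniformly_terminating X0 qc qd1.
Proof.
move=> ut2; have [N HN] := ut2 (2^-1) ltac:(by rewrite invr_gt0).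
pose rho := 1 - m ^+ N / 2.
have mN0 : 0 < m ^+ N by exact: exprn_gt0.
have mN1 : m ^+ N <= 1 by rewrite exprn_ile1 // ltW.
apply: (contraction_terminates X0 qc qd1 hc hd1 N rho).
  by apply/andP; split; rewrite /rho; lra.
move=> y; have := absorption_dominated N y; have := HN y.
by have := survival_ge0 X0 qc qd2 hc hd2 N y; rewrite /rho => h1 h2 h3; nra.
Qed.

End Domination.

(* Pointwise form of Gibbs' inequality, from exp u >= 1 + u with equality
   only at u = 0: w ln (t / w) <= t - w, strictly unless t = w. *)
Lemma xlog_ratio_le {R : realType} {w t : R} : 0 < w -> 0 < t ->
  w * ln (t / w) <= t - w /\ (t != w -> w * ln (t / w) < t - w).
Proof.
move=> w0 t0; have q0 : 0 < t / w by rewrite divr_gt0.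
have tw : w * (t / w) = t by rewrite mulrCA divff ?gt_eqF // mulr1.
split.
  have := expR_ge1Dx (ln (t / w)); rewrite lnK ?posrE // => h.
  have : w * (1 + ln (t / w)) <= w * (t / w) by rewrite ler_pM2l.
  by rewrite tw; lra.
move=> tnw; have q1 : t / w != 1.
  by apply: contra tnw => /eqP q1; rewrite -tw q1 mulr1.
have := @expR_gt1Dx R (ln (t / w)); rewrite lnK ?posrE // ln_eq0 // => /(_ q1) h.
have : w * (1 + ln (t / w)) < w * (t / w) by rewrite ltr_pM2l.
by rewrite tw; lra.
Qed.

Lemma gibbs_inequality {R : realType} {I J : finType} (w t : I -> J -> R) :
  (forall i j, 0 <= w i j) -> (forall i j, 0 <= t i j) ->
  \sum_i \sum_j w i j = 1 -> \sum_i \sum_j t i j = 1 ->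
  (forall i j, 0 < w i j -> 0 < t i j) ->
  \sum_i \sum_j w i j * ln (t i j / w i j) <= 0 /\
  (\sum_i \sum_j w i j * ln (t i j / w i j) = 0 -> forall i j, w i j = t i j).
Proof.
move=> w0 t0 sw st wt.
pose gap i j := (t i j - w i j) - w i j * ln (t i j / w i j).
have gap0 i j : 0 <= gap i j.
  rewrite /gap subr_ge0; have [->|wn] := eqVneq (w i j) 0.
    by rewrite mul0r subr0.
  have wp : 0 < w i j by rewrite lt_def wn w0.
  exact: (proj1 (xlog_ratio_le wp (wt _ _ wp))).
have sgap : \sum_i \sum_j gap i j = - \sum_i \sum_j w i j * ln (t i j / w i j).
  rewrite /gap; under eq_bigr => i _ do rewrite !sumrB.
  by rewrite !sumrB st sw subrr sub0r.
have sgap0 : 0 <= \sum_i \sum_j gap i j by do 2![apply: sumr_ge0 => ? _].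
split; first by move: sgap0; rewrite sgap oppr_ge0.
move=> h0 i j; have gapz : gap i j = 0.
  move: sgap; rewrite h0 oppr0 => /eqP.
  rewrite psumr_eq0 => [/allP H|]; last by move=> ? _; exact: sumr_ge0.
  move: (H i (mem_index_enum i)); rewrite psumr_eq0 // => /allP H'.
  by apply/eqP; exact: (H' j (mem_index_enum j)).
move: gapz; rewrite /gap; have [wz|wn] := eqVneq (w i j) 0.
  by rewrite wz mul0r !subr0 => ->.
have wp : 0 < w i j by rewrite lt_def wn w0.
have [//|tnw] := eqVneq (t i j) (w i j).
by have := proj2 (xlog_ratio_le wp (wt _ _ wp)) tnw; lra.
Qed.

Section EStep.
Variables (R : realType) (X A : finType) (X0 : {set X}).
Variables (p : X -> A -> X -> R) (pi : X -> A -> R) (r : X -> A -> R) (eta : R).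
Hypotheses (hp : is_kernel p) (hpi : is_policy pi).

Definition estep_reward (qc : X -> A -> R) (qd : X -> A -> X -> R)
    (x : X) (a : A) (x' : X) : R :=
  eta * r x a - ln (qc x a / pi x a) - ln (qd x a x' / p x a x').

Lemma trunc_obj_cost qc qd n x :
  trunc_obj X0 p pi r eta qc qd n x = trunc_cost X0 qc qd (estep_reward qc qd) n x.
Proof.
elim: n x => [|n IH] x //=; case: ifP => // _.
by apply: eq_bigr => a _; apply: eq_bigr => y _; rewrite IH.
Qed.

Lemma estep_bellman qc qd : admissible X0 p pi qc qd ->
  let W := estep_obj X0 p pi r eta qc qd in
  (forall x, x \in X0 -> W x = 0) /\
  (forall x, x \notin X0 ->
     W x = step_exp qc qd (fun a y => estep_reward qc qd x a y + W y) x).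
Proof.
case=> hc hd _ _ ht W.
have EW x : W x = limn (trunc_cost X0 qc qd (estep_reward qc qd) ^~ x).
  by rewrite /W /estep_obj; congr (limn _); apply: funext => n; exact: trunc_obj_cost.
have [H0 H1] := trunc_cost_bellman X0 qc qd hc hd (estep_reward qc qd)
  (terminates_uniformly X0 qc qd hc hd ht).
split=> x hx; rewrite !EW; first exact: H0.
by rewrite H1 //; apply: eq_bigr => a _; apply: eq_bigr => y _; rewrite EW.
Qed.

Lemma ln_mulp {a b : R} : 0 < a -> 0 < b -> ln (a * b) = ln a + ln b.
Proof. by move=> ha hb; apply: lnM; rewrite posrE. Qed.

Lemma ln_divp {a b : R} : 0 < a -> 0 < b -> ln (a / b) = ln a - ln b.
Proof. by move=> ha hb; apply: ln_div; rewrite posrE. Qed.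

Section GibbsPair.
Variable V : X -> R.

Definition soft_next (x : X) (a : A) : R := \sum_y p x a y * expR (V y).
Definition soft_q (x : X) (a : A) : R := eta * r x a + ln (soft_next x a).
Definition soft_partition (x : X) : R := \sum_a pi x a * expR (soft_q x a).
Definition gibbs_policy (x : X) (a : A) : R :=
  pi x a * expR (soft_q x a) / soft_partition x.
Definition gibbs_kernel (x : X) (a : A) (x' : X) : R :=
  p x a x' * expR (V x') / soft_next x a.

Lemma soft_next_gt0 x a : 0 < soft_next x a.
Proof.
by apply: wavg_gt0; [case: (hp x a) | case: (hp x a) | move=> y; exact: expR_gt0].
Qed.

Lemma soft_partition_gt0 x : 0 < soft_partition x.
Proof.
by apply: wavg_gt0; [case: (hpi x) | case: (hpi x) | move=> a; exact: expR_gt0].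
Qed.

Lemma gibbs_policy_is_policy : is_policy gibbs_policy.
Proof.
move=> x; split.
  move=> a; apply: divr_ge0; last exact: ltW (soft_partition_gt0 x).
  by apply: mulr_ge0; [case: (hpi x) | exact: expR_ge0].
by rewrite -big_distrl /= divff // gt_eqF // soft_partition_gt0.
Qed.

Lemma gibbs_kernel_is_kernel : is_kernel gibbs_kernel.
Proof.
move=> x a; split.
  move=> y; apply: divr_ge0; last exact: ltW (soft_next_gt0 x a).
  by apply: mulr_ge0; [case: (hp x a) | exact: expR_ge0].
by rewrite -big_distrl /= divff // gt_eqF // soft_next_gt0.
Qed.

Lemma gibbs_policy_gt0 x a : (0 < gibbs_policy x a) = (0 < pi x a).
Proof.
by rewrite /gibbs_policy pmulr_lgt0 ?invr_gt0 ?soft_partition_gt0 // pmulr_lgt0 ?expR_gt0.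
Qed.

Lemma gibbs_kernel_gt0 x a y : (0 < gibbs_kernel x a y) = (0 < p x a y).
Proof.
by rewrite /gibbs_kernel pmulr_lgt0 ?invr_gt0 ?soft_next_gt0 // pmulr_lgt0 ?expR_gt0.
Qed.

(* Relative log-likelihood of the Gibbs pair w.r.t. (qc, qd) at x, i.e.
   minus the KL divergence between the one-step laws. *)
Definition gibbs_gap (qc : X -> A -> R) (qd : X -> A -> X -> R) (x : X) : R :=
  \sum_a \sum_y qc x a * qd x a y *
    ln (gibbs_policy x a * gibbs_kernel x a y / (qc x a * qd x a y)).

Lemma gibbs_decomposition qc qd x : is_policy qc -> is_kernel qd ->
  (forall a, 0 < qc x a -> 0 < pi x a) ->
  (forall a y, 0 < qc x a -> 0 < qd x a y -> 0 < p x a y) ->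
  step_exp qc qd (fun a y => estep_reward qc qd x a y + V y) x =
  ln (soft_partition x) + gibbs_gap qc qd x.
Proof.
move=> hc hd hpc hpd.
rewrite -{1}(step_exp_cst qc qd hc hd (ln (soft_partition x)) x) -step_expD.
apply: (eq_step_exp _ _ hc hd) => a y wpos.
have qcp : 0 < qc x a.
  by rewrite lt_def (proj1 (hc x) a) andbT; apply: contraTneq wpos => ->; rewrite mul0r ltxx.
have qdp : 0 < qd x a y.
  by rewrite lt_def (proj1 (hd x a) y) andbT; apply: contraTneq wpos => ->; rewrite mulr0 ltxx.
have pip := hpc a qcp; have pp := hpd a y qcp qdp.
have Zap := soft_next_gt0 x a; have Zxp := soft_partition_gt0 x.
have qcgp : 0 < gibbs_policy x a by rewrite gibbs_policy_gt0.
have qdgp : 0 < gibbs_kernel x a y by rewrite gibbs_kernel_gt0.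
have ln_qcg : ln (gibbs_policy x a) =
    ln (pi x a) + (eta * r x a + ln (soft_next x a)) - ln (soft_partition x).
  by rewrite ln_divp ?mulr_gt0 ?expR_gt0 // ln_mulp ?expR_gt0 // expRK.
have ln_qdg : ln (gibbs_kernel x a y) = ln (p x a y) + V y - ln (soft_next x a).
  by rewrite ln_divp ?mulr_gt0 ?expR_gt0 // ln_mulp ?expR_gt0 // expRK.
rewrite /estep_reward (ln_divp qcp pip) (ln_divp qdp pp).
rewrite (ln_divp (mulr_gt0 qcgp qdgp) (mulr_gt0 qcp qdp)).
by rewrite (ln_mulp qcgp qdgp) (ln_mulp qcp qdp) ln_qcg ln_qdg; lra.
Qed.

Lemma gibbs_step_value x :
  step_exp gibbs_policy gibbs_kernel
    (fun a y => estep_reward gibbs_policy gibbs_kernel x a y + V y) x =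
  ln (soft_partition x).
Proof.
rewrite gibbs_decomposition.
- rewrite /gibbs_gap big1 ?addr0 // => a _; rewrite big1 // => y _.
  have [->|tn] := eqVneq (gibbs_policy x a * gibbs_kernel x a y) 0.
    by rewrite mul0r.
  by rewrite divff // ln1 mulr0.
- exact: gibbs_policy_is_policy.
- exact: gibbs_kernel_is_kernel.
- by move=> a; rewrite gibbs_policy_gt0.
- by move=> a y _; rewrite gibbs_kernel_gt0.
Qed.

Lemma gibbs_gap_le0 qc qd x : is_policy qc -> is_kernel qd ->
  (forall a, 0 < qc x a -> 0 < pi x a) ->
  (forall a y, 0 < qc x a -> 0 < qd x a y -> 0 < p x a y) ->
  gibbs_gap qc qd x <= 0 /\ (gibbs_gap qc qd x = 0 ->
    forall a y, qc x a * qd x a y = gibbs_policy x a * gibbs_kernel x a y).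
Proof.
move=> hc hd hpc hpd; apply: gibbs_inequality.
- by move=> a y; exact: step_weight_ge0.
- by move=> a y; exact: (step_weight_ge0 _ _ gibbs_policy_is_policy gibbs_kernel_is_kernel).
- exact: step_weight_sum1.
- exact: (step_weight_sum1 _ _ gibbs_policy_is_policy gibbs_kernel_is_kernel).
move=> a y wp.
have qcp : 0 < qc x a.
  by rewrite lt_def (proj1 (hc x) a) andbT; apply: contraTneq wp => ->; rewrite mul0r ltxx.
have qdp : 0 < qd x a y.
  by rewrite lt_def (proj1 (hd x a) y) andbT; apply: contraTneq wp => ->; rewrite mulr0 ltxx.
by rewrite mulr_gt0 ?gibbs_policy_gt0 ?gibbs_kernel_gt0 ?hpc ?hpd.
Qed.
End GibbsPair.

Lemma gibbs_kernel_dominates V : exists m : R,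
  [/\ 0 < m, m <= 1 & forall x a y, m * p x a y <= gibbs_kernel V x a y].
Proof.
pose L := \sum_y `|V y|.
have VL y : `|V y| <= L by exact: (ler_sum_term (fun y => `|V y|)).
have L0 : 0 <= L by apply: sumr_ge0.
exists (expR (- (L + L))); split; first exact: expR_gt0.
  by rewrite expR_le1 oppr_le0 addr_ge0.
move=> x a y; rewrite /gibbs_kernel -mulrA mulrC.
apply: ler_wpM2l; first by case: (hp x a).
rewrite ler_pdivlMr ?soft_next_gt0 //.
have ZL : soft_next V x a <= expR L.
  apply: le_trans (_ : \sum_y p x a y * expR L <= _).
    apply: ler_sum => z _; apply: ler_wpM2l; first by case: (hp x a).
    by rewrite ler_expR; apply: le_trans (ler_norm _) (VL z).
  by rewrite -big_distrl /= (proj2 (hp x a)) mul1r.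
apply: le_trans (_ : expR (- (L + L)) * expR L <= _).
  by apply: ler_wpM2l => //; exact: expR_ge0.
rewrite -expRD ler_expR; have := VL y; rewrite ler_norml => /andP[h _]; lra.
Qed.

Hypothesis hterm : forall qc, is_policy qc -> terminates X0 qc p.

(* Gibbs pairs are admissible: their supports are those of (pi, p), and
   their kernel dominates a multiple of p, which terminates. *)
Lemma gibbs_admissible V :
  admissible X0 p pi (gibbs_policy V) (gibbs_kernel V).
Proof.
have hcg := gibbs_policy_is_policy V; have hdg := gibbs_kernel_is_kernel V.
have [m [m0 m1 dom]] := gibbs_kernel_dominates V.
split => //.
- by move=> x a _; rewrite gibbs_policy_gt0.
- by move=> x a y _ _; rewrite gibbs_kernel_gt0.
apply: uniformly_terminating_terminates => //.
apply: (@dominated_terminates R X A X0 _ _ p m hcg hdg hp m0 m1 dom).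
exact: (terminates_uniformly X0 _ _ hcg hp (hterm _ hcg)).
Qed.

(* By the variational identity and Gibbs' inequality W - W' is a
   subsolution for the Gibbs chain, hence nonpositive. *)
Lemma gibbs_improvement qc qd (W : X -> R) : admissible X0 p pi qc qd ->
  (forall x, x \in X0 -> W x <= 0) ->
  (forall x, x \notin X0 ->
     W x <= step_exp qc qd (fun a y => estep_reward qc qd x a y + W y) x) ->
  forall x, W x <= estep_obj X0 p pi r eta (gibbs_policy W) (gibbs_kernel W) x.
Proof.
move=> [hc hd hpc hpd _] W0 Wsub.
have hadmg := gibbs_admissible W; have [hcg hdg _ _ htg] := hadmg.
have [Wg0 Wgb] := estep_bellman _ _ hadmg.
move=> x; rewrite -subr_le0; move: x.
apply: (subsolution_nonpos X0 _ _ hcg hdg).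
- exact: (terminates_uniformly X0 _ _ hcg hdg htg).
- by move=> x hx; rewrite Wg0 // subr0; exact: W0.
move=> x hx; rewrite Wgb //.
have [gap0 _] := gibbs_gap_le0 W _ _ x hc hd (fun a => hpc x a hx) (fun a y => hpd x a y hx).
have := Wsub x hx; rewrite gibbs_decomposition //; last 2 first.
- by move=> a; exact: hpc.
- by move=> a y; exact: hpd.
move=> hW; rewrite -(step_expB_cancel _ _ (estep_reward
  (gibbs_policy W) (gibbs_kernel W) x) (fun _ y => W y)) step_expB.
by rewrite gibbs_step_value; lra.
Qed.

(* At an optimum the value solves the soft Bellman equation V = ln Z_V and
   the optimal one-step law is the Gibbs one: by optimality and policy
   improvement the Gibbs pair of V has value exactly V, which forces the
   gap of Gibbs' inequality to vanish. *)
Lemma optimal_is_gibbs qcs qds : estep_optimal X0 p pi r eta qcs qds ->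
  let V := estep_obj X0 p pi r eta qcs qds in
  (forall x, x \notin X0 -> V x = ln (soft_partition V x)) /\
  (forall x a y, x \notin X0 ->
     qcs x a * qds x a y = gibbs_policy V x a * gibbs_kernel V x a y).
Proof.
move=> [hadm hmax] V; have [hc hd hpc hpd _] := hadm.
have [V0 Vb] := estep_bellman _ _ hadm; rewrite -/V in V0 Vb.
have [Vg0 Vgb] := estep_bellman _ _ (gibbs_admissible V).
have VgV : estep_obj X0 p pi r eta (gibbs_policy V) (gibbs_kernel V) = V.
  apply: funext => x; apply/eqP; rewrite eq_le hmax /=; last exact: gibbs_admissible.
  apply: gibbs_improvement hadm _ _ x => [y hy | y hy]; first by rewrite V0.
  by rewrite -Vb.
have soft x : x \notin X0 -> V x = ln (soft_partition V x).
  by move=> hx; rewrite -{1}VgV Vgb // VgV gibbs_step_value.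
split=> [|x a y hx]; first exact: soft.
have supp_c a' : 0 < qcs x a' -> 0 < pi x a' by exact: hpc.
have supp_d a' y' : 0 < qcs x a' -> 0 < qds x a' y' -> 0 < p x a' y'.
  exact: hpd.
have [_ gap_eq0] := gibbs_gap_le0 V _ _ x hc hd supp_c supp_d.
apply: gap_eq0; have := Vb x hx; rewrite gibbs_decomposition // -soft //; lra.
Qed.

End EStep.

Arguments optimal_is_gibbs {R X A X0 p pi r eta}.
Arguments gibbs_kernel_is_kernel {R X A p}.

Lemma joint_factorization_unique {R : realType} {X A : finType}
    {qc qc' : X -> A -> R} {qd qd' : X -> A -> X -> R} (x : X) (a : A) :
  is_kernel qd -> is_kernel qd' ->
  (forall y, qc x a * qd x a y = qc' x a * qd' x a y) ->
  qc x a = qc' x a /\ (0 < qc' x a -> forall y, qd x a y = qd' x a y).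
Proof.
move=> hd hd' joint.
have marg : qc x a = qc' x a.
  rewrite -[qc x a]mulr1 -[qc' x a]mulr1 -{1}(proj2 (hd x a)) -(proj2 (hd' x a)).
  by rewrite !big_distrr; apply: eq_bigr => y _; exact: joint.
split=> // qc'0 y; apply: (mulfI (lt0r_neq0 qc'0)).
by rewrite -joint marg.
Qed.

Theorem mainTheorem5 (R : realType) (X A : finType) (X0 : {set X})
  (p : X -> A -> X -> R) (pi : X -> A -> R) (r : X -> A -> R) (eta : R) :
  0 < eta ->
  is_kernel p ->
  is_policy pi ->
  (forall qc : X -> A -> R, is_policy qc -> terminates X0 qc p) ->
  forall (qcs : X -> A -> R) (qds : X -> A -> X -> R),
  estep_optimal X0 p pi r eta qcs qds ->
  let V := estep_obj X0 p pi r eta qcs qds in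
  let Q := fun x a => eta * r x a + ln (\sum_(x' : X) p x a x' * expR (V x')) in
  (forall x a x', x \notin X0 -> 0 < pi x a ->
     qds x a x' = p x a x' * expR (V x') / expR (Q x a - eta * r x a)) /\
  (forall x a, x \notin X0 ->
     qcs x a = pi x a * expR (Q x a) / expR (V x)).
Proof.
move=> _ hp hpi hterm qcs qds hopt V Q.
have [hc hd _ _ _] := hopt.1.
have [soft joint] := optimal_is_gibbs hp hpi hterm _ _ hopt.
rewrite -/V in soft joint.
have factor (x : X) (a : A) (hx : x \notin X0) :=
  joint_factorization_unique x a hd (gibbs_kernel_is_kernel hp V)
    (fun y => joint x a y hx).
split=> [x a y hx pip | x a hx].
  have [_ ->] := factor x a hx; last by rewrite gibbs_policy_gt0.
  by rewrite /gibbs_kernel /Q /= addrAC subrr add0r lnK // posrE soft_next_gt0.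
have [-> _] := factor x a hx.
by rewrite /gibbs_policy [in expR (V x)]soft // lnK // posrE soft_partition_gt0.
Qed.
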